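(* Let $D_+, D_-$ be a pair of SBP operators of order $q\ge1$ on $[a,b]$ with associated data $H,S,\mathbf{p}_0,\mathbf{p}_n,\mathbf{x}$, which is nullspace consistent but does not have the eigenvalue property. Let $\|\cdot\|$ be any norm on $\mathbb{R}^{(n+1)\times(n+1)}$ and $\varepsilon>0$. Then there exists a real symmetric positive semidefinite matrix $S'\in\mathbb{R}^{(n+1)\times(n+1)}$ with $S'\mathbf{x}^j=\mathbf{0}$ for $j=0,\dots,q$, such that, setting $D_+' = D_+ + \tfrac12 H^{-1}S'$ and $D_-' = D_- - \tfrac12 H^{-1}S'$: (i) $D_+', D_-'$ form a pair of SBP operators of order $q$ on $[a,b]$ with the data $H$, $S+S'$, $\mathbf{p}_0$, $\mathbf{p}_n$, $\mathbf{x}$; (ii) $D_+'$ is nullspace consistent and has the eigenvalue property, i.e. every eigenvalue of $\tilde D_+' := D_+' + H^{-1}\mathbf{p}_0\mathbf{p}_0^\top$ has strictly positive real part; (iii) every eigenpair $(\lambda,\mathbf{v})$ of $\tilde D_+ = D_+ + H^{-1}\mathbf{p}_0\mathbf{p}_0^\top$ with $\operatorname{Re}(\lambda)\ne0$ is also an eigenpair of $\tilde D_+'$; (iv) $\|D_+' - D_+\|\le\varepsilon$.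
   Context: Let $[a,b]$ be an interval with $b>a$ and $n\ge 1$. For $\mathbf{x}\in\mathbb{R}^{n+1}$, $\mathbf{x}^j$ denotes elementwise exponentiation, with $\mathbf{x}^0=\mathbf{1}=(1,\dots,1)^\top$. Matrices $D_+, D_-\in\mathbb{R}^{(n+1)\times(n+1)}$ form a pair of SBP (summation-by-parts) operators of order $q\ge 1$ on $[a,b]$ if there exist matrices $H,S\in\mathbb{R}^{(n+1)\times(n+1)}$ and vectors $\mathbf{p}_0,\mathbf{p}_n,\mathbf{x}\in\mathbb{R}^{n+1}$ such that: (A) $D_\pm \mathbf{x}^j = j\mathbf{x}^{j-1}$, $\mathbf{p}_0^\top\mathbf{x}^j = a^j$, $\mathbf{p}_n^\top \mathbf{x}^j = b^j$ for $j=0,\dots,q$ (with $0\cdot\mathbf{x}^{-1}:=\mathbf{0}$); (B) $H=H^\top$ is positive definite; (C) $HD_+ + D_+^\top H = -\mathbf{p}_0\mathbf{p}_0^\top + \mathbf{p}_n\mathbf{p}_n^\top + S$ with $S=S^\top$ positive semidefinite; (D) $HD_+ + D_-^\top H = -\mathbf{p}_0\mathbf{p}_0^\top + \mathbf{p}_n\mathbf{p}_n^\top$; (E) $\mathbf{x}=(x_0,\dots,x_n)^\top$ with $x_i\ne x_j$ for $i\ne j$. The SBP operator is called nullspace consistent if $\ker D_+=\operatorname{span}\{\mathbf{1}\}$. Set $\tilde D_+ := D_+ + H^{-1}\mathbf{p}_0\mathbf{p}_0^\top$ (with the $H,\mathbf{p}_0$ of the given data). The SBP operator has the eigenvalue property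 if every eigenvalue of $\tilde D_+$ has strictly positive real part. *)

From HB Require Import structures.
From mathcomp Require Import all_boot all_order all_algebra.
From mathcomp Require Import reals complex.
Set Implicit Arguments. Unset Strict Implicit. Unset Printing Implicit Defensive.
Import Order.TTheory GRing.Theory Num.Theory.
Local Open Scope ring_scope.

(* Matrices are of size (n+1)x(n+1), indices 'I_n.+1 = {0..n}; vectors are columns. *)

Definition xpow (R : ringType) (m : nat) (x : 'cV[R]_m) (j : nat) : 'cV[R]_m :=
  \col_i (x i 0 ^+ j).

Definition posdef (R : realFieldType) (m : nat) (A : 'M[R]_m) : Prop :=
  forall v : 'cV[R]_m, v != 0 -> 0 < (v^T *m A *m v) 0 0.

Definition psd (R : realFieldType) (m : nat) (A : 'M[R]_m) : Prop :=
  forall v : 'cV[R]_m, 0 <= (v^T *m A *m v) 0 0.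

Definition SBP_pair (R : realFieldType) (n q : nat) (a b : R)
  (Dp Dm H S : 'M[R]_n.+1) (p0 pn x : 'cV[R]_n.+1) : Prop :=
  (forall j, (j <= q)%N ->
     [/\ Dp *m xpow x j = j%:R *: xpow x j.-1,
         Dm *m xpow x j = j%:R *: xpow x j.-1,
         p0^T *m xpow x j = (a ^+ j)%:M &
         pn^T *m xpow x j = (b ^+ j)%:M]) /\
  (H^T = H /\ posdef H) /\
  (H *m Dp + Dp^T *m H = - (p0 *m p0^T) + pn *m pn^T + S /\ S^T = S /\ psd S) /\
  (H *m Dp + Dm^T *m H = - (p0 *m p0^T) + pn *m pn^T) /\
  (forall i j : 'I_n.+1, i != j -> x i 0 != x j 0).

Definition nullspace_consistent (R : fieldType) (m : nat) (D : 'M[R]_m) : Prop :=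
  forall v : 'cV[R]_m, D *m v = 0 <-> exists c : R, v = c *: const_mx 1.

Definition tildeD (R : fieldType) (m : nat) (Dp H : 'M[R]_m) (p0 : 'cV[R]_m) : 'M[R]_m :=
  Dp + invmx H *m (p0 *m p0^T).

Definition eigenpair (R : rcfType) (m : nat) (A : 'M[R]_m) (lam : R[i])
  (v : 'cV[R[i]]_m) : Prop :=
  v != 0 /\ map_mx (real_complex R) A *m v = lam *: v.

Definition eigenvalue_property (R : rcfType) (m : nat) (A : 'M[R]_m) : Prop :=
  forall (lam : R[i]) (v : 'cV[R[i]]_m), eigenpair A lam v -> 0 < complex.Re lam.

Definition is_matrix_norm (R : realFieldType) (m : nat) (N : 'M[R]_m -> R) : Prop :=
  [/\ forall A, 0 <= N A,
      forall A, N A = 0 -> A = 0,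
      forall (c : R) A, N (c *: A) = `|c| * N A &
      forall A B, N (A + B) <= N A + N B].

From HB Require Import structures.
From mathcomp Require Import all_boot all_order all_algebra.
From mathcomp Require Import reals complex.
From mathcomp Require Import ring lra zify.
Set Implicit Arguments. Unset Strict Implicit. Unset Printing Implicit Defensive.
Import Order.TTheory GRing.Theory Num.Theory.
Local Open Scope ring_scope.

(* Write A := D~+ and P := p0 p0^T + pn pn^T + S, so that the SBP relations
   read H A + A^T H = P with P positive semidefinite.  By this Lyapunov identity
   every eigenvalue of A has nonnegative real part, and the eigenvectors of the
   purely imaginary ones lie in the unobservable subspace K of (P, A), the
   largest A-invariant subspace of ker P.  Let the rows of B be a basis of K and
   Y := B H.  Then Y A = - M Y where M represents A^T on K; nullspace
   consistency makes A injective on ker P, so M is invertible, and the Lyapunov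
   identity makes M skew-adjoint for the Gram matrix Y B^T.  The correction
   S' := c Y^T Y therefore
   - vanishes on every x^j, by induction on j, because Y A x^j = j Y x^(j-1);
   - vanishes on the eigenvectors of A with nonzero real part, which Y would
     otherwise map to eigenvectors of M with nonzero real part;
   - makes P + S' definite on K, which removes the purely imaginary eigenvalues.
   Taking c small gives the norm bound. *)

Definition qform (R : pzRingType) m (A : 'M[R]_m) (v : 'cV[R]_m) : R :=
  (v^T *m A *m v) 0 0.

Lemma addmxE (V : nmodType) m n (A B : 'M[V]_(m, n)) i j :
  (A + B) i j = A i j + B i j.
Proof. by rewrite mxE. Qed.

Lemma scalemxE (R : pzRingType) m n (c : R) (A : 'M[R]_(m, n)) i j :
  (c *: A) i j = c * A i j.
Proof. by rewrite mxE. Qed.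

Lemma submxE (V : zmodType) m n (A B : 'M[V]_(m, n)) i j :
  (A - B) i j = A i j - B i j.
Proof. by rewrite !mxE. Qed.

Section QuadraticForms.
Variables (R : realFieldType) (m : nat).
Implicit Types (A : 'M[R]_m) (u v : 'cV[R]_m).

Lemma sqnorm_ge0 p (v : 'cV[R]_p) : 0 <= (v^T *m v) 0 0.
Proof. by rewrite !mxE sumr_ge0 // => i _; rewrite !mxE -expr2 sqr_ge0. Qed.

Lemma sqnorm_eq0 p (v : 'cV[R]_p) : (v^T *m v) 0 0 = 0 -> v = 0.
Proof.
rewrite !mxE => /eqP; rewrite psumr_eq0 => [/allP vi0|i _]; last first.
  by rewrite !mxE -expr2 sqr_ge0.
apply/matrixP=> i j; rewrite ord1 !mxE.
by have /vi0 := mem_index_enum i; rewrite /= !mxE -expr2 sqrf_eq0 => /eqP.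
Qed.

Lemma bilin_sym A u v : A^T = A -> (u^T *m A *m v) 0 0 = (v^T *m A *m u) 0 0.
Proof.
move=> sA; transitivity ((u^T *m A *m v)^T 0 0); first by rewrite [RHS]mxE.
by rewrite !trmx_mul trmxK sA mulmxA.
Qed.

Lemma qform_gram p (Y : 'M[R]_(p, m)) v :
  qform (Y^T *m Y) v = ((Y *m v)^T *m (Y *m v)) 0 0.
Proof. by rewrite /qform trmx_mul !mulmxA. Qed.

Lemma psd_gram p (Y : 'M[R]_(p, m)) : psd (Y^T *m Y).
Proof. by move=> v; rewrite [X in 0 <= X]qform_gram sqnorm_ge0. Qed.

Lemma outer_sym u : (u *m u^T)^T = u *m u^T.
Proof. by rewrite trmx_mul trmxK. Qed.

Lemma psd_outer u : psd (u *m u^T).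
Proof. by have := psd_gram u^T; rewrite trmxK. Qed.

Lemma qformD A u v : A^T = A ->
  qform A (u + v) = qform A u + 2 * (u^T *m A *m v) 0 0 + qform A v.
Proof.
move=> sA; rewrite /qform [(u + v)^T]raddfD /= mulmxDl mulmxDr !mulmxDl.
rewrite !addmxE.
by rewrite (bilin_sym v u sA) mulr2n mulrDl mul1r !addrA.
Qed.

Lemma qformZ A c v : qform A (c *: v) = c ^+ 2 * qform A v.
Proof.
rewrite /qform [(c *: v)^T]linearZ /= -scalemxAl -scalemxAr !scalemxE.
by rewrite -scalemxAl scalemxE mulrA -expr2.
Qed.

Lemma psd_qform_eq0 A v : A^T = A -> psd A -> qform A v = 0 -> A *m v = 0.
Proof.
move=> sA pA Av0; set y := A *m v.
have line t : 0 <= t ^+ 2 * qform A y + 2 * (t * (y^T *m A *m v) 0 0).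
  have := pA (t *: y + v); rewrite -/(qform _ _) qformD // qformZ Av0 addr0.
  by rewrite [(t *: y)^T]linearZ /= -!scalemxAl scalemxE.
(* A nonnegative quadratic t^2 d + 2 t e without constant term has e = 0. *)
have yAv0 : (y^T *m A *m v) 0 0 = 0.
  move: (qform A y) (pA y : 0 <= qform A y) line => d d0.
  have d1 : 0 < d + 1 by lra.
  move: (_ 0 0) => e /(_ (- (e / (d + 1)))).
  have -> : e = e / (d + 1) * (d + 1) by rewrite divfK // lt0r_neq0.
  move: (e / (d + 1)) => t; rewrite mulfK ?lt0r_neq0 // => ht.
  nra.
by apply: sqnorm_eq0; rewrite -yAv0 trmx_mul !mulmxA.
Qed.

Lemma posdef_mulmx_eq0 A v : posdef A -> A *m v = 0 -> v = 0.
Proof.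
move=> pA Av0; apply/eqP; apply: contraT => /pA.
by rewrite -mulmxA Av0 mulmx0 mxE ltxx.
Qed.

Lemma posdef_unitmx A : posdef A -> A \in unitmx.
Proof.
move=> pA; rewrite -unitmx_tr -row_free_unit; apply: inj_row_free => z zA0.
apply: trmx_inj; rewrite trmx0; apply: posdef_mulmx_eq0 pA _.
by rewrite -[A]trmxK -trmx_mul zA0 trmx0.
Qed.

Lemma posdef_qform_ge0 A v : posdef A -> 0 <= qform A v.
Proof.
by move=> pA; have [->|/pA/ltW//] := eqVneq v 0; rewrite /qform mulmx0 mxE.
Qed.

Lemma psdD A1 A2 : psd A1 -> psd A2 -> psd (A1 + A2).
Proof. by move=> A1psd A2psd v; rewrite mulmxDr mulmxDl addmxE addr_ge0. Qed.

Lemma psdD_ker (Q1 Q2 : 'M[R]_m) v : Q1^T = Q1 -> psd Q1 -> Q2^T = Q2 -> psd Q2 ->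
  (Q1 + Q2) *m v = 0 -> Q1 *m v = 0 /\ Q2 *m v = 0.
Proof.
move=> Q1T Q1psd Q2T Q2psd Qv0.
have : qform Q1 v + qform Q2 v = 0.
  by rewrite /qform -addmxE -mulmxDl -mulmxDr -mulmxA Qv0 mulmx0 mxE.
have := Q1psd v; have := Q2psd v; rewrite -!/(qform _ _) => ? ? ?.
by split; apply: psd_qform_eq0 => //; lra.
Qed.

Lemma gram_mulmx_eq0 p (Y : 'M[R]_(p, m)) v : Y^T *m Y *m v = 0 -> Y *m v = 0.
Proof.
move=> Gv0; apply: sqnorm_eq0.
by rewrite -qform_gram /qform -mulmxA Gv0 mulmx0 mxE.
Qed.

Lemma posdef_invmx A : A^T = A -> posdef A -> posdef (invmx A).
Proof.
move=> AT Apd v vn0; have Au := posdef_unitmx Apd.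
have un0 : invmx A *m v != 0.
  by apply: contraNneq vn0 => u0; rewrite -(mulKVmx Au v) u0 mulmx0.
by have := Apd _ un0; rewrite trmx_mul trmx_inv AT -!mulmxA mulKVmx.
Qed.

End QuadraticForms.

Lemma half_corr_lyapunov (R : realFieldType) m (H S' : 'M[R]_m) :
  H^T = H -> H \in unitmx -> S'^T = S' ->
  let T := 2^-1 *: (invmx H *m S') in
  H *m T = T^T *m H /\ H *m T + T^T *m H = S'.
Proof.
move=> HT Hu S'T T; have HT' : H *m T = 2^-1 *: S' by rewrite -scalemxAr mulKVmx.
have TH : T^T *m H = 2^-1 *: S'.
  rewrite linearZ /= trmx_mul trmx_inv HT S'T -scalemxAl.
  by rewrite -mulmxA mulVmx // mulmx1.
rewrite HT' TH -scalerDl (_ : 2^-1 + 2^-1 = 1 :> R) ?scale1r //; lra.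
Qed.

Lemma mulmx_eq0_colwise (R : pzRingType) m p r k (X : 'M[R]_(p, m))
    (Z : 'M[R]_(r, m)) (W : 'M[R]_(m, k)) :
  (forall w : 'cV[R]_m, X *m w = 0 -> Z *m w = 0) -> X *m W = 0 -> Z *m W = 0.
Proof.
move=> XZ XW0; apply/matrixP=> i j.
have /(_ _)/matrixP/(_ i 0) := XZ (col j W); rewrite !colE mulmxA XW0 mul0mx.
by move=> /(_ erefl); rewrite mulmxA -colE !mxE.
Qed.

Section ComplexEigenpairs.
Variables (R : rcfType) (m : nat).
Local Notation cmx M := (map_mx (real_complex R) M).

Definition mxRe p q (v : 'M[R[i]]_(p, q)) := map_mx (@complex.Re R) v.
Definition mxIm p q (v : 'M[R[i]]_(p, q)) := map_mx (@complex.Im R) v.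

Lemma mxRe_cmxM p q r (X : 'M[R]_(p, q)) (v : 'M[R[i]]_(q, r)) :
  mxRe (cmx X *m v) = X *m mxRe v.
Proof.
apply/matrixP=> i j; rewrite !mxE raddf_sum; apply: eq_bigr => k _.
by rewrite !mxE; case: (v k j) => c d /=; simpc.
Qed.

Lemma mxIm_cmxM p q r (X : 'M[R]_(p, q)) (v : 'M[R[i]]_(q, r)) :
  mxIm (cmx X *m v) = X *m mxIm v.
Proof.
apply/matrixP=> i j; rewrite !mxE raddf_sum; apply: eq_bigr => k _.
by rewrite !mxE; case: (v k j) => c d /=; simpc.
Qed.

Lemma mxReZ p q (lam : R[i]) (v : 'M[R[i]]_(p, q)) :
  mxRe (lam *: v) = complex.Re lam *: mxRe v - complex.Im lam *: mxIm v.
Proof.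
by apply/matrixP=> i j; rewrite !mxE; case: lam => a b; case: (v i j) => c d /=.
Qed.

Lemma mxImZ p q (lam : R[i]) (v : 'M[R[i]]_(p, q)) :
  mxIm (lam *: v) = complex.Im lam *: mxRe v + complex.Re lam *: mxIm v.
Proof.
apply/matrixP=> i j; rewrite !mxE; case: lam => a b; case: (v i j) => c d /=.
by rewrite addrC.
Qed.

Lemma mxReIm_inj p q (u v : 'M[R[i]]_(p, q)) :
  mxRe u = mxRe v -> mxIm u = mxIm v -> u = v.
Proof.
move=> /matrixP eRe /matrixP eIm; apply/matrixP=> i j.
have := eRe i j; have := eIm i j; rewrite !mxE.
by case: (u i j) => a b; case: (v i j) => c d /= -> ->.
Qed.

Lemma mxReIm_eq0 p q (v : 'M[R[i]]_(p, q)) :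
  (v == 0) = (mxRe v == 0) && (mxIm v == 0).
Proof.
apply/eqP/andP => [->|[/eqP vRe /eqP vIm]].
  by split; apply/eqP/matrixP=> i j; rewrite !mxE.
by apply: mxReIm_inj; rewrite ?vRe ?vIm; apply/matrixP=> i j; rewrite !mxE.
Qed.

Lemma cmxM_eq0 p q (X : 'M[R]_(p, q)) (v : 'cV[R[i]]_q) :
  (cmx X *m v = 0) <-> (X *m mxRe v = 0 /\ X *m mxIm v = 0).
Proof.
rewrite -mxRe_cmxM -mxIm_cmxM; split => [/eqP|[Re0 Im0]].
  by rewrite mxReIm_eq0 => /andP[/eqP ? /eqP ?].
by apply/eqP; rewrite mxReIm_eq0 Re0 Im0 eqxx.
Qed.

Lemma cvec_qform_gt0 (H : 'M[R]_m) (v : 'cV[R[i]]_m) : posdef H -> v != 0 ->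
  0 < qform H (mxRe v) + qform H (mxIm v).
Proof.
move=> Hpd; rewrite mxReIm_eq0 negb_and => /orP[/Hpd|/Hpd] pos.
  by rewrite ltr_wpDr // posdef_qform_ge0.
by rewrite ltr_wpDl // posdef_qform_ge0.
Qed.

Section Lyapunov.
Variables (H A Q : 'M[R]_m).
Hypotheses (HT : H^T = H) (lyapA : H *m A + A^T *m H = Q).

Lemma lyapunov_qform y : qform Q y = 2 * (y^T *m H *m (A *m y)) 0 0.
Proof.
rewrite -lyapA /qform mulmxDr mulmxDl addmxE mulr2n mulrDl mul1r.
by rewrite (mulmxA y^T A^T H) -trmx_mul (bilin_sym _ y HT) !mulmxA.
Qed.

Lemma lyapunov_eigen_identity lam v : cmx A *m v = lam *: v ->
  2 * complex.Re lam * (qform H (mxRe v) + qform H (mxIm v)) =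
  qform Q (mxRe v) + qform Q (mxIm v).
Proof.
move=> Av; have := congr1 (@mxIm _ _) Av; have := congr1 (@mxRe _ _) Av.
rewrite mxRe_cmxM mxIm_cmxM mxReZ mxImZ !lyapunov_qform => -> ->.
rewrite mulmxBr mulmxDr -!scalemxAr submxE addmxE !scalemxE.
by rewrite (bilin_sym (mxIm v) (mxRe v) HT) /qform; ring.
Qed.

Hypotheses (Hpd : posdef H) (Qpsd : psd Q).

Lemma lyapunov_Re_ge0 lam v : eigenpair A lam v -> 0 <= complex.Re lam.
Proof.
move=> [vn0 /lyapunov_eigen_identity e]; have pos := cvec_qform_gt0 Hpd vn0.
have := Qpsd (mxRe v); have := Qpsd (mxIm v); rewrite -!/(qform _ _) => ? ?.
nra.
Qed.

Lemma lyapunov_Re0_ker lam v : Q^T = Q -> eigenpair A lam v ->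
  complex.Re lam = 0 -> cmx Q *m v = 0.
Proof.
move=> QT [_ /lyapunov_eigen_identity] e Re0; apply/cmxM_eq0.
have := Qpsd (mxRe v); have := Qpsd (mxIm v); rewrite -!/(qform _ _) => ? ?.
move: e; rewrite Re0 mulr0 mul0r => e.
by split; apply: psd_qform_eq0 => //; lra.
Qed.

End Lyapunov.

Lemma skew_eigen_Re0 (H A : 'M[R]_m) lam v : H^T = H -> posdef H ->
  H *m A + A^T *m H = 0 -> eigenpair A lam v -> complex.Re lam = 0.
Proof.
move=> HT Hpd skewA [vn0 /(lyapunov_eigen_identity HT skewA)].
have qform0 u : qform 0 u = 0 by rewrite /qform mulmx0 mul0mx mxE.
rewrite !qform0 addr0 => /eqP; rewrite !mulf_eq0 pnatr_eq0 /=.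
by rewrite (gt_eqF (cvec_qform_gt0 Hpd vn0)) orbF => /eqP.
Qed.

Lemma eigenpair_cmxX (A : 'M[R]_m) lam (v : 'cV[R[i]]_m) k :
  cmx A *m v = lam *: v -> cmx (A ^+ k) *m v = lam ^+ k *: v.
Proof.
move=> Av; elim: k => [|k IH]; first by rewrite !expr0 map_mx1 mul1mx scale1r.
by rewrite exprSr map_mxM -mulmxA Av -scalemxAr IH scalerA exprS.
Qed.

End ComplexEigenpairs.

Section UnobservableSubspace.
Variables (R : fieldType) (m : nat) (P A : 'M[R]_m).

Fixpoint unobs_mx k : 'M[R]_m :=
  if k is k'.+1 then (unobs_mx k' :&: kermx ((P *m A ^+ k')^T))%MS else 1%:M.

Lemma sub_unobs_mx p (X : 'M[R]_(p, m)) k :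
  (X <= unobs_mx k)%MS <-> (forall i, (i < k)%N -> X *m (P *m A ^+ i)^T = 0).
Proof.
elim: k => [|k IH] /=; first by split=> // _; apply: submx1.
rewrite sub_capmx; split => [/andP[/IH Xk /sub_kermxP XPk] i|XP].
  by rewrite ltnS leq_eqVlt => /orP[/eqP->|/Xk].
by apply/andP; split; [apply/IH => i ik; apply: XP; lia|apply/sub_kermxP/XP].
Qed.

Lemma unobs_mx_stable : exists k, (unobs_mx k <= unobs_mx k.+1)%MS.
Proof.
(* Otherwise the rank of unobs_mx k would drop m + 1 times. *)
suff [//|] : (exists k, (unobs_mx k <= unobs_mx k.+1)%MS) \/
             (\rank (unobs_mx m.+1) + m.+1 <= m)%N by lia.
elim: m.+1 => [|k [|rk]]; [by right; rewrite addn0 rank_leq_col|by left|].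
have [stab|nstab] := boolP (unobs_mx k <= unobs_mx k.+1)%MS.
  by left; exists k.
right; have [le_rk eq_rk] :=
  mxrank_leqif_sup (capmxSl (unobs_mx k) (kermx ((P *m A ^+ k)^T))).
have : (\rank (unobs_mx k.+1) < \rank (unobs_mx k))%N.
  by rewrite ltn_neqAle eq_rk (negbTE nstab) le_rk.
lia.
Qed.

(* Kalman's unobservable subspace of (P, A) in row form, read off where the
   decreasing chain [unobs_mx k] stops decreasing. *)
Definition unobs := unobs_mx (xchoose unobs_mx_stable).

Lemma trmx_mulmxXSr k : (P *m A ^+ k.+1)^T = A^T *m (P *m A ^+ k)^T.
Proof. by rewrite exprSr mulmxA !trmx_mul. Qed.

Lemma unobs_mulmx_tr p (X : 'M[R]_(p, m)) :
  (X <= unobs)%MS -> (X *m A^T <= unobs)%MS.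
Proof.
have stab := xchooseP unobs_mx_stable.
move=> /submx_trans /(_ stab) /sub_unobs_mx XP; apply/sub_unobs_mx => i lti.
by rewrite -mulmxA -trmx_mulmxXSr XP.
Qed.

Lemma sub_unobs p (X : 'M[R]_(p, m)) :
  (X <= unobs)%MS <-> (forall k, X *m (P *m A ^+ k)^T = 0).
Proof.
split=> [|XP]; last by apply/sub_unobs_mx => k _; apply: XP.
move=> Xunobs k; elim: k p X Xunobs => [|k IH] p X Xunobs.
  have /sub_unobs_mx := submx_trans Xunobs (xchooseP unobs_mx_stable).
  by apply.
by rewrite trmx_mulmxXSr mulmxA IH // unobs_mulmx_tr.
Qed.

Lemma row_base_unobs_mulP : P^T = P -> row_base unobs *m P = 0.
Proof.
move=> PT; have /sub_unobs/(_ 0%N) : (row_base unobs <= unobs)%MS.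
  by rewrite eq_row_base.
by rewrite expr0 mulmx1 PT.
Qed.

End UnobservableSubspace.

Section InvariantKernelCorrection.
Variables (R : rcfType) (m r : nat) (H A P : 'M[R]_m) (B : 'M[R]_(r, m)).
Hypotheses (HT : H^T = H) (Hpd : posdef H) (PT : P^T = P).
Hypothesis lyapA : H *m A + A^T *m H = P.
Hypothesis A_inj : forall w : 'cV[R]_m, P *m w = 0 -> A *m w = 0 -> w = 0.
Hypotheses (Bfree : row_free B) (BP : B *m P = 0) (BA : stablemx B A^T).
Hypothesis Bmax :
  forall w : 'cV[R]_m, (forall k, P *m A ^+ k *m w = 0) -> (w^T <= B)%MS.

Local Notation cmx M := (map_mx (real_complex R) M).
Local Notation Y := (B *m H).
Local Notation G := (B *m H *m B^T).

Definition restr := B *m A^T *m pinvmx B.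
Local Notation M := restr.

Lemma restr_mul : M *m B = B *m A^T.
Proof. exact: mulmxKpV. Qed.

Lemma Hcoord_mulA : Y *m A = - (M *m Y).
Proof.
have HA : H *m A = P - A^T *m H by rewrite -lyapA addrK.
by rewrite -mulmxA HA mulmxBr BP sub0r (mulmxA B) -restr_mul mulmxA.
Qed.

Lemma restr_unit : M \in unitmx.
Proof.
rewrite -row_free_unit; apply: inj_row_free => z zM0.
apply: (row_free_inj Bfree); rewrite mul0mx.
apply: trmx_inj; rewrite trmx0; apply: A_inj.
  by rewrite -PT -trmx_mul -mulmxA BP mulmx0 trmx0.
by rewrite -[A]trmxK -trmx_mul -mulmxA -restr_mul mulmxA zM0 mul0mx trmx0.
Qed.

Lemma Hcoord_inj (w : 'cV[R]_m) :
  (forall k, P *m A ^+ k *m w = 0) -> Y *m w = 0 -> w = 0.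
Proof.
move=> /Bmax /submxP [c wB] Yw0; apply/eqP; apply: contraT => /Hpd.
have -> : w^T *m H *m w = c *m (Y *m w) by rewrite wB !mulmxA.
by rewrite Yw0 mulmx0 mxE ltxx.
Qed.

Lemma Hcoord_chain (u : nat -> 'cV[R]_m) q :
  (forall j, (j <= q)%N -> Y *m A *m u j = j%:R *: (Y *m u j.-1)) ->
  forall j, (j <= q)%N -> Y *m u j = 0.
Proof.
move=> chain.
have MY j : (j <= q)%N -> M *m (Y *m u j) = - (j%:R *: (Y *m u j.-1)).
  by move=> jq; rewrite mulmxA -[M *m Y]opprK -Hcoord_mulA mulNmx chain.
elim=> [|j IH] jq; rewrite -[Y *m u _](mulKmx restr_unit) MY //.
  by rewrite scale0r oppr0 mulmx0.
by rewrite /= (IH (ltnW jq)) scaler0 oppr0 mulmx0.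
Qed.

Lemma Hgram_sym : G^T = G.
Proof. by rewrite !trmx_mul trmxK HT mulmxA. Qed.

Lemma posdef_Hgram : posdef G.
Proof.
move=> z zn0; have Bz0 : B^T *m z != 0.
  apply: contra zn0 => /eqP Bz0; apply/eqP/trmx_inj; apply: (row_free_inj Bfree).
  by rewrite trmx0 mul0mx -[B in _ *m B]trmxK -trmx_mul Bz0 trmx0.
by have := Hpd Bz0; rewrite trmx_mul trmxK !mulmxA.
Qed.

Lemma restr_skew : invmx G *m M + M^T *m invmx G = 0.
Proof.
have YAB : Y *m A *m B^T = - (M *m G) by rewrite Hcoord_mulA mulNmx !mulmxA.
have YABT : (Y *m A *m B^T)^T = M *m G.
  by rewrite !trmx_mul !trmxK HT mulmxA -restr_mul !mulmxA.
have GM : G *m M^T = - (M *m G).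
  by rewrite -[G in G *m _]Hgram_sym -trmx_mul -[in LHS]YABT trmxK YAB.
have Gu := posdef_unitmx posdef_Hgram.
rewrite -[M in invmx G *m M](mulmxK Gu) -[M^T](mulKmx Gu) GM mulmxN mulNmx.
by rewrite !mulmxA addrN.
Qed.

Lemma Hcoord_eigen lam (v : 'cV[R[i]]_m) : eigenpair A lam v ->
  complex.Re lam != 0 -> cmx Y *m v = 0.
Proof.
move=> [vn0 Av] Re_neq0; apply/eqP; apply: contraNT Re_neq0 => Yv_neq0.
have Mv : cmx M *m (cmx Y *m v) = (- lam) *: (cmx Y *m v).
  by rewrite mulmxA -map_mxM -[M *m Y]opprK -Hcoord_mulA map_mxN mulNmx
    map_mxM -mulmxA Av -scalemxAr scaleNr.
have := skew_eigen_Re0 _ (posdef_invmx Hgram_sym posdef_Hgram)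
  restr_skew (conj Yv_neq0 Mv).
by rewrite trmx_inv Hgram_sym raddfN /= => /(_ erefl)/eqP; rewrite oppr_eq0.
Qed.

Hypothesis Ppsd : psd P.
Variable c : R.
Hypothesis c_gt0 : 0 < c.
Local Notation S' := (c *: (Y^T *m Y)).
Local Notation A' := (A + 2^-1 *: (invmx H *m S')).

Lemma corr_sym : S'^T = S'.
Proof. by rewrite linearZ /= trmx_mul trmxK. Qed.

Lemma psd_corr : psd S'.
Proof.
move=> v; rewrite -scalemxAr -scalemxAl scalemxE mulr_ge0 ?(ltW c_gt0) //.
exact: psd_gram.
Qed.

Lemma corr_lyapunov : H *m A' + A'^T *m H = P + S'.
Proof.
have [_ HT_S'] := half_corr_lyapunov HT (posdef_unitmx Hpd) corr_sym.
by rewrite mulmxDr raddfD /= mulmxDl addrACA lyapA HT_S'.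
Qed.

Lemma cmx_corr (v : 'cV[R[i]]_m) :
  cmx Y *m v = 0 -> cmx A' *m v = cmx A *m v.
Proof.
move=> Yv0.
have -> : 2^-1 *: (invmx H *m S') = (2^-1 * c) *: (invmx H *m Y^T *m Y).
  by rewrite -scalemxAr scalerA (mulmxA _ Y^T).
rewrite map_mxD map_mxZ mulmxDl.
by rewrite (map_mxM _ _ Y) -scalemxAl -mulmxA Yv0 mulmx0 scaler0 addr0.
Qed.

Lemma eigenpair_corr lam v : eigenpair A lam v ->
  complex.Re lam != 0 -> eigenpair A' lam v.
Proof.
by move=> [vn0 Av] Re_neq0; rewrite /eigenpair cmx_corr ?Av
  ?(Hcoord_eigen (conj vn0 Av)).
Qed.

Lemma eigenvalue_property_corr : eigenvalue_property A'.
Proof.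
move=> lam w [wn0 A'w].
have QT : (P + S')^T = P + S' by rewrite raddfD /= PT corr_sym.
have Qpsd := psdD Ppsd psd_corr.
have Re_ge0 := lyapunov_Re_ge0 HT corr_lyapunov Hpd Qpsd (conj wn0 A'w).
rewrite lt0r Re_ge0 andbT; apply/eqP => Re0.
have /cmxM_eq0 [Qre Qim] :=
  lyapunov_Re0_ker HT corr_lyapunov Qpsd QT (conj wn0 A'w) Re0.
have [Pre S're] := psdD_ker PT Ppsd corr_sym psd_corr Qre.
have [Pim S'im] := psdD_ker PT Ppsd corr_sym psd_corr Qim.
have Yker (u : 'cV[R]_m) : S' *m u = 0 -> Y *m u = 0.
  rewrite -scalemxAl => /eqP; rewrite scalemx_eq0 (gt_eqF c_gt0) => /eqP.
  exact: gram_mulmx_eq0.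
have Yw0 : cmx Y *m w = 0 by apply/cmxM_eq0; split; apply: Yker.
have Aw : cmx A *m w = lam *: w by rewrite -(cmx_corr Yw0).
have PAw0 k : cmx (P *m A ^+ k) *m w = 0.
  have Pw0 : cmx P *m w = 0 by apply/cmxM_eq0.
  by rewrite map_mxM -mulmxA (eigenpair_cmxX _ Aw) -scalemxAr Pw0 scaler0.
move/cmxM_eq0: Yw0 => [Yre Yim]; move/negP: wn0; apply; rewrite mxReIm_eq0.
have PAre k : P *m A ^+ k *m mxRe w = 0 by have /cmxM_eq0[] := PAw0 k.
have PAim k : P *m A ^+ k *m mxIm w = 0 by have /cmxM_eq0[] := PAw0 k.
by rewrite (Hcoord_inj PAre Yre) (Hcoord_inj PAim Yim) eqxx.
Qed.

End InvariantKernelCorrection.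

Lemma unobs_correction (R : rcfType) m (H A P : 'M[R]_m) c :
  H^T = H -> posdef H -> P^T = P -> psd P -> H *m A + A^T *m H = P ->
  (forall w : 'cV[R]_m, P *m w = 0 -> A *m w = 0 -> w = 0) -> 0 < c ->
  let Y := row_base (unobs P A) *m H in
  let S' := c *: (Y^T *m Y) in
  let A' := A + 2^-1 *: (invmx H *m S') in
  [/\ S'^T = S', psd S', eigenvalue_property A',
      forall lam v, eigenpair A lam v -> complex.Re lam != 0 ->
        eigenpair A' lam v &
      forall (u : nat -> 'cV[R]_m) q,
        (forall j, (j <= q)%N -> Y *m A *m u j = j%:R *: (Y *m u j.-1)) ->
        forall j, (j <= q)%N -> Y *m u j = 0].
Proof.
move=> HT Hpd PT Ppsd lyapA A_inj c_gt0 /=.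
have Bfree := row_base_free (unobs P A).
have BP := row_base_unobs_mulP A PT.
have BA : stablemx (row_base (unobs P A)) A^T.
  by rewrite eq_row_base unobs_mulmx_tr ?eq_row_base.
have Bmax (w : 'cV[R]_m) : (forall k, P *m A ^+ k *m w = 0) ->
    (w^T <= row_base (unobs P A))%MS.
  move=> PAw0; rewrite eq_row_base; apply/sub_unobs => k.
  by rewrite -trmx_mul PAw0 trmx0.
split.
- exact: corr_sym.
- exact: psd_corr.
- by apply: (eigenvalue_property_corr (P := P)).
- by move=> lam v; apply: (eigenpair_corr (P := P)).
- by move=> u q; apply: (Hcoord_chain (P := P)).
Qed.

Lemma xpow0 (R : nzRingType) m (x : 'cV[R]_m) : xpow x 0 = const_mx 1.
Proof. by apply/matrixP=> i j; rewrite !mxE expr0. Qed.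

Section SBPOperators.
Variables (R : rcfType) (n q : nat) (a b : R) (Dp Dm H S : 'M[R]_n.+1).
Variables (p0 pn x : 'cV[R]_n.+1).
Hypothesis sbp : SBP_pair q a b Dp Dm H S p0 pn x.
Local Notation P := (p0 *m p0^T + pn *m pn^T + S).
Local Notation A := (tildeD Dp H p0).

Lemma SBP_lyapunov : H *m A + A^T *m H = P.
Proof.
have [_ [[HT Hpd] [[eC _] _]]] := sbp; have Hu := posdef_unitmx Hpd.
rewrite /tildeD mulmxDr raddfD /= mulmxDl mulKVmx // !trmx_mul trmxK trmx_inv HT.
rewrite mulmxKV // addrACA eC.
by rewrite addrC !addrA addrK.
Qed.

Lemma dissipation_sym : P^T = P.
Proof.
have [_ [_ [[_ [ST _]] _]]] := sbp.
by rewrite !raddfD /= !trmx_mul !trmxK ST.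
Qed.

Lemma psd_dissipation : psd P.
Proof.
have [_ [_ [[_ [_ Spsd]] _]]] := sbp.
by apply: psdD => //; apply: psdD; apply: psd_outer.
Qed.

Lemma dissipation_ker k (W : 'M[R]_(n.+1, k)) : P *m W = 0 -> p0^T *m W = 0.
Proof.
have [_ [_ [[_ [ST Spsd]] _]]] := sbp.
apply: mulmx_eq0_colwise => w Pw0.
have Q1T : (p0 *m p0^T + pn *m pn^T)^T = p0 *m p0^T + pn *m pn^T.
  by rewrite raddfD /= !outer_sym.
have [Q1w0 _] := psdD_ker Q1T (psdD (psd_outer p0) (psd_outer pn)) ST Spsd Pw0.
have [p0w0 _] :=
  psdD_ker (outer_sym p0) (psd_outer p0) (outer_sym pn) (psd_outer pn) Q1w0.
by apply: gram_mulmx_eq0; rewrite trmxK.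
Qed.

Lemma SBP_const :
  Dp *m const_mx 1 = 0 :> 'cV_n.+1 /\ p0^T *m const_mx 1 = 1%:M :> 'M_1.
Proof.
have [hA _] := sbp; have [Dx _ p0x _] := hA 0%N (leq0n q).
by move: Dx p0x; rewrite xpow0 scale0r expr0.
Qed.

Lemma tildeD_inj : nullspace_consistent Dp ->
  forall w : 'cV[R]_n.+1, P *m w = 0 -> A *m w = 0 -> w = 0.
Proof.
move=> nsc w /dissipation_ker p0w0.
rewrite /tildeD mulmxDl -!mulmxA p0w0 !mulmx0 addr0 => /nsc [c wc].
move: p0w0; rewrite wc -scalemxAr (proj2 SBP_const) => /matrixP /(_ 0 0).
by rewrite !mxE /= mulr1n mulr1 => ->; rewrite scale0r.
Qed.

Lemma tildeD_xpow r (Z : 'M[R]_(r, n.+1)) j : Z *m P = 0 -> (j <= q)%N ->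
  Z *m H *m A *m xpow x j = j%:R *: (Z *m H *m xpow x j.-1).
Proof.
have [hA [[_ Hpd] _]] := sbp; have Hu := posdef_unitmx Hpd.
move=> ZP0 jq; have [Dx _ _ _] := hA j jq.
have Zp0 : Z *m p0 = 0.
  apply: trmx_inj; rewrite trmx_mul trmx0; apply: dissipation_ker.
  by rewrite -dissipation_sym -trmx_mul ZP0 trmx0.
rewrite /tildeD mulmxDr mulmxDl -(mulmxA _ Dp) Dx -scalemxAr !mulmxA mulmxK //.
by rewrite Zp0 !mul0mx addr0.
Qed.

End SBPOperators.

Lemma nullspace_consistent_of_eigenvalue_property (R : rcfType) m
    (D H : 'M[R]_m) (p0 : 'cV[R]_m) :
  D *m const_mx 1 = 0 :> 'cV_m -> p0^T *m const_mx 1 = 1%:M :> 'M_1 ->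
  eigenvalue_property (tildeD D H p0) -> nullspace_consistent D.
Proof.
move=> D1 p01 EP v; split=> [Dv0|[c ->]]; last by rewrite -scalemxAr D1 scaler0.
set c := (p0^T *m v) 0 0; exists c; apply/eqP; rewrite -subr_eq0; apply/eqP.
set w := v - c *: const_mx 1.
have p0w0 : p0^T *m w = 0.
  rewrite mulmxBr -scalemxAr p01 [p0^T *m v]mx11_scalar -/c.
  by apply/matrixP=> i j; rewrite !mxE !ord1 /= mulr1n mulr1 subrr.
have Aw0 : tildeD D H p0 *m w = 0.
  by rewrite /tildeD mulmxDl mulmxBr Dv0 -scalemxAr D1 scaler0 subrr add0r
    -!mulmxA p0w0 !mulmx0.
apply/eqP; apply: contraT => wn0.
have : eigenpair (tildeD D H p0) 0 (map_mx (real_complex R) w).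
  by split; rewrite ?map_mx_eq0 // -map_mxM Aw0 map_mx0 scale0r.
by move/EP; rewrite ltxx.
Qed.

Lemma SBP_pair_perturb (R : realFieldType) n q a b (Dp Dm H S S' : 'M[R]_n.+1)
    (p0 pn x : 'cV[R]_n.+1) :
  SBP_pair q a b Dp Dm H S p0 pn x -> S'^T = S' -> psd S' ->
  (forall j, (j <= q)%N -> S' *m xpow x j = 0) ->
  SBP_pair q a b (Dp + 2^-1 *: (invmx H *m S')) (Dm - 2^-1 *: (invmx H *m S'))
    H (S + S') p0 pn x.
Proof.
move=> [hA [[HT Hpd] [[eC [ST Spsd]] [eD xE]]]] S'T S'psd S'x.
have Tx j : (j <= q)%N -> 2^-1 *: (invmx H *m S') *m xpow x j = 0.
  by move=> jq; rewrite -scalemxAl -mulmxA S'x // mulmx0 scaler0.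
have [HTT HT_S'] := half_corr_lyapunov HT (posdef_unitmx Hpd) S'T.
split.
  move=> j jq; have [Dpx Dmx p0x pnx] := hA j jq.
  by split; rewrite // ?mulmxBl ?mulmxDl Tx // ?addr0 ?subr0.
split=> //; split; last split=> //.
- split; first by rewrite mulmxDr raddfD /= mulmxDl addrACA eC HT_S' !addrA.
  by split; [rewrite raddfD /= ST S'T|exact: psdD].
- by rewrite mulmxDr raddfB /= mulmxBl addrACA eD HTT subrr addr0.
Qed.

Lemma norm_small_scale (R : realFieldType) m (N : 'M[R]_m -> R) X eps :
  is_matrix_norm N -> 0 < eps -> N (2^-1 *: ((eps / (N X + 1)) *: X)) <= eps.
Proof.
move=> [N_ge0 _ NZ _] eps_gt0; have NX1 : 0 < N X + 1 by rewrite ltr_wpDl ?N_ge0.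
have := divfK (lt0r_neq0 NX1) eps; have := divr_gt0 eps_gt0 NX1.
rewrite !NZ !ger0_norm ?invr_ge0 ?ler0n ?divr_ge0 ?(ltW eps_gt0) ?(ltW NX1) //.
by move: (eps / _) (N_ge0 X) => t NX_ge0 t_gt0 teps; nra.
Qed.

Theorem theorem2 (R : realType) (n q : nat) (a b : R)
  (Dp Dm H S : 'M[R]_n.+1) (p0 pn x : 'cV[R]_n.+1) :
  (1 <= n)%N -> (1 <= q)%N -> a < b ->
  SBP_pair q a b Dp Dm H S p0 pn x ->
  nullspace_consistent Dp ->
  ~ eigenvalue_property (tildeD Dp H p0) ->
  forall (N : 'M[R]_n.+1 -> R), is_matrix_norm N ->
  forall eps : R, 0 < eps ->
  exists S' : 'M[R]_n.+1,
    [/\ S'^T = S', psd S',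
        (forall j, (j <= q)%N -> S' *m xpow x j = 0) &
        let Dp' := Dp + 2^-1 *: (invmx H *m S') in
        let Dm' := Dm - 2^-1 *: (invmx H *m S') in
        [/\ SBP_pair q a b Dp' Dm' H (S + S') p0 pn x,
            nullspace_consistent Dp' /\ eigenvalue_property (tildeD Dp' H p0),
            (forall (lam : R[i]) (v : 'cV[R[i]]_n.+1),
                eigenpair (tildeD Dp H p0) lam v -> complex.Re lam != 0 ->
                eigenpair (tildeD Dp' H p0) lam v) &
            N (Dp' - Dp) <= eps]].
Proof.
move=> _ _ _ sbp nsc _ N NN eps eps_gt0.
have [_ [[HT Hpd] _]] := sbp.
set A := tildeD Dp H p0; set P := p0 *m p0^T + pn *m pn^T + S.
set Y := row_base (unobs P A) *m H.
set c := eps / (N (invmx H *m (Y^T *m Y)) + 1).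
have c_gt0 : 0 < c by have [N_ge0 _ _ _] := NN; rewrite divr_gt0 ?ltr_wpDl ?N_ge0.
have [S'T S'psd EP' eig' chain] := unobs_correction HT Hpd (dissipation_sym sbp)
  (psd_dissipation sbp) (SBP_lyapunov sbp) (tildeD_inj sbp nsc) c_gt0.
have S'x j : (j <= q)%N -> c *: (Y^T *m Y) *m xpow x j = 0.
  move=> jq; rewrite -scalemxAl -mulmxA (chain (xpow x) q) ?mulmx0 ?scaler0 //.
  move=> k kq.
  by rewrite (tildeD_xpow sbp) // row_base_unobs_mulP // (dissipation_sym sbp).
exists (c *: (Y^T *m Y)); split=> // Dp' Dm'.
have A'E : tildeD Dp' H p0 = A + 2^-1 *: (invmx H *m (c *: (Y^T *m Y))).
  by rewrite /tildeD /Dp' addrAC.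
have [D1 p01] := SBP_const sbp.
split; first exact: SBP_pair_perturb.
- have EPD : eigenvalue_property (tildeD Dp' H p0) by rewrite A'E.
  split=> //; apply: (nullspace_consistent_of_eigenvalue_property _ p01 EPD).
  by rewrite mulmxDl D1 -scalemxAl -mulmxA -(xpow0 x) S'x ?mulmx0 ?scaler0 ?add0r.
- by move=> lam v; rewrite A'E; apply: eig'.
by rewrite /Dp' addrC addKr -scalemxAr /c; apply: norm_small_scale.
Qed.
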